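(* Let $\Gamma$ be a finite graph with right angled Artin group $R(\Gamma)$. If $m(R(\Gamma))\le 3$, then $\Gamma$ contains no induced subgraph isomorphic to a 4-cycle (square).
   Context: For a finite simple graph $\Gamma$, $R(\Gamma)$ is the group with one generator per vertex and relations that generators of adjacent vertices commute. $m(G)$ is the minimal $d$ such that $G$ embeds in $GL(d,\mathbb{F})$ for some field $\mathbb{F}$ ($\infty$ if none). *)

From HB Require Import structures.
From mathcomp Require Import all_boot all_order all_algebra.
From Stdlib Require Import Relation_Operators.
Set Implicit Arguments. Unset Strict Implicit. Unset Printing Implicit Defensive.
Import GRing.Theory.
Local Open Scope ring_scope.

Definition simple_graph (T : finType) (e : rel T) : Prop :=
  symmetric e /\ irreflexive e.

(* Words in the generators of R(Gamma) and their inverses: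
   (x, true) = generator x, (x, false) = its inverse. *)
Definition raag_word (T : finType) := seq (T * bool).

Inductive raag_step (T : finType) (e : rel T) :
    raag_word T -> raag_word T -> Prop :=
  | raag_cancel (s t : raag_word T) (x : T) (b : bool) :
      raag_step e (s ++ [:: (x, b); (x, ~~ b)] ++ t) (s ++ t)
  | raag_commute (s t : raag_word T) (x y : T) (b c : bool) :
      e x y ->
      raag_step e (s ++ [:: (x, b); (y, c)] ++ t) (s ++ [:: (y, c); (x, b)] ++ t).

Definition raag_eq (T : finType) (e : rel T) : raag_word T -> raag_word T -> Prop :=
  clos_refl_sym_trans _ (raag_step e).

Definition mx_eval (F : fieldType) (d : nat) (T : finType)
    (A : T -> 'M[F]_d) (w : raag_word T) : 'M[F]_d :=
  foldr (fun p M => (if p.2 then A p.1 else invmx (A p.1)) *m M) 1%:M w.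

(* R(Gamma) embeds in GL(d, F): an assignment of invertible matrices to the
   vertices such that adjacent vertices go to commuting matrices (hence a
   homomorphism R(Gamma) -> GL(d,F)), whose kernel is trivial. *)
Definition raag_embeds_GL (T : finType) (e : rel T) (F : fieldType) (d : nat) : Prop :=
  exists A : T -> 'M[F]_d,
    [/\ forall x, A x \in unitmx,
        forall x y, e x y -> A x *m A y = A y *m A x
      & forall w : raag_word T, mx_eval A w = 1%:M -> raag_eq e w [::]].

Definition raag_m_le (T : finType) (e : rel T) (n : nat) : Prop :=
  exists (d : nat) (F : fieldType), (d <= n)%N /\ raag_embeds_GL e F d.

Definition has_induced_square (T : finType) (e : rel T) : Prop :=
  exists a b c d : T,
    [/\ uniq [:: a; b; c; d],
        [&& e a b, e b c, e c d & e d a]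
      & ~~ e a c && ~~ e b d].

(* Let a-b-c-d be an induced square and A a faithful representation of R(Γ)
   in GL_3(F) (one of smaller degree is padded with an identity block).  Then
   X1 = A a and X2 = A c both commute with Y1 = A b and Y2 = A d.  A matrix
   with a cyclic vector has a commutative centralizer, and a 3x3 matrix
   without one is a scalar plus a rank-one matrix; so unless X1, X2 commute
   or Y1, Y2 commute, all four are scalar plus rank one.  The rank-one parts
   of the X_i and Y_j commute, which forces those of Y1 and Y2 to share their
   image or their kernel.  Hence Y1 and Y2 preserve a subspace W and act by
   scalars on W and on F^3/W; their commutators C then satisfy C = 1 on W
   and on F^3/W, so any two of them commute and [[b, d], [b, d^-1]] is sent
   to 1.  But [a, c], [b, d] and [[b, d], [b, d^-1]] are nontrivial in R(Γ),
   as an action of R(Γ) through S_4 shows. *)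

From mathcomp Require Import all_boot all_order all_algebra.
From mathcomp Require Import zify ring.
From Stdlib Require Import Classical.
Set Implicit Arguments. Unset Strict Implicit. Unset Printing Implicit Defensive.
Import GRing.Theory.
Local Open Scope ring_scope.

(** * Words in R(Γ) *)

Section RaagWords.
Variables (T : finType) (e : rel T).

Definition word_inv (w : raag_word T) : raag_word T :=
  rev [seq (p.1, ~~ p.2) | p <- w].

Definition word_comm (u v : raag_word T) : raag_word T :=
  u ++ v ++ word_inv u ++ word_inv v.

Section WordAction.
Variables (X : Type) (act : T -> bool -> X -> X).
Hypothesis act_cancel : forall x b, cancel (act x (~~ b)) (act x b).
Hypothesis act_comm :
  forall x y b c, e x y -> act x b \o act y c =1 act y c \o act x b.

Definition word_act (w : raag_word T) (z : X) : X :=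
  foldr (fun p => act p.1 p.2) z w.

Lemma word_act_cat s t z : word_act (s ++ t) z = word_act s (word_act t z).
Proof. exact: foldr_cat. Qed.

Lemma word_act_step w w' : raag_step e w w' -> word_act w =1 word_act w'.
Proof.
case=> [s t x b | s t x y b c exy] z; rewrite !word_act_cat /=.
  by rewrite act_cancel.
by congr word_act; exact: (act_comm b c exy).
Qed.

Lemma word_act_raag_eq w w' : raag_eq e w w' -> word_act w =1 word_act w'.
Proof.
elim=> {w w'} [w w' /word_act_step // | // | w w' _ IH z | w w' w'' _ IH _ IH' z].
  by rewrite IH.
by rewrite IH IH'.
Qed.
End WordAction.

Definition swap23 (i : nat) : nat :=
  match i with 2 => 3 | 3 => 2 | _ => i end%N.
Definition rot012 (i : nat) : nat :=
  match i with 0 => 1 | 1 => 2 | 2 => 0 | _ => i end%N.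
Definition rot021 (i : nat) : nat :=
  match i with 0 => 2 | 1 => 0 | 2 => 1 | _ => i end%N.

Lemma swap23K : involutive swap23.
Proof. by do 4?case. Qed.

Lemma rot012K : cancel rot021 rot012.
Proof. by do 3?case. Qed.

Lemma rot021K : cancel rot012 rot021.
Proof. by do 3?case. Qed.

Section NonAdjacentPair.
Variables a c : T.
Hypotheses (nac : ~~ e a c) (nca : ~~ e c a) (a_neq_c : a != c).

(* [a] and [c] act as the permutations (2 3) and (0 1 2) of [{0, 1, 2, 3}],
   all other vertices trivially; as [a] and [c] are not adjacent, this is an
   action of R(Γ), and the words below are nontrivial because they move 0. *)
Definition pair_act (x : T) (b : bool) : nat -> nat :=
  if x == a then swap23 else if x == c then (if b then rot012 else rot021) else id.

Lemma pair_act_cancel x b : cancel (pair_act x (~~ b)) (pair_act x b).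
Proof.
rewrite /pair_act; case: eqP => _; first exact: swap23K.
by case: eqP => // _; case: b; [exact: rot012K | exact: rot021K].
Qed.

Lemma pair_act_comm x y b b' :
  e x y -> pair_act x b \o pair_act y b' =1 pair_act y b' \o pair_act x b.
Proof.
move=> exy z; rewrite /pair_act.
have [xa | xa] := eqVneq x a; have [ya | ya] := eqVneq y a => //=.
- have [yc | //] := eqVneq y c.
  by move: nac; rewrite -xa -yc exy.
- have [xc | //] := eqVneq x c.
  by move: nca; rewrite -xc -ya exy.
- have [_ | //] := eqVneq x c; have [_ | //] := eqVneq y c.
  by case: b; case: b' => //=; rewrite ?rot012K ?rot021K.
Qed.

Lemma pair_act_letters b : pair_act a b = swap23 /\
  pair_act c b = if b then rot012 else rot021.
Proof. by rewrite /pair_act eqxx eq_sym (negbTE a_neq_c) eqxx. Qed.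

Lemma word_act_nontrivial w :
  word_act pair_act w 0%N != 0%N -> ~ raag_eq e w [::].
Proof.
move=> w0 /(word_act_raag_eq pair_act_cancel pair_act_comm) /(_ 0%N) w1.
by rewrite w1 eqxx in w0.
Qed.

Lemma raag_comm_nontrivial :
  ~ raag_eq e (word_comm [:: (a, true)] [:: (c, true)]) [::].
Proof.
apply: word_act_nontrivial.
by rewrite /word_act /=; have [-> ->] := pair_act_letters true;
   have [-> ->] := pair_act_letters false.
Qed.

Lemma raag_comm2_nontrivial :
  ~ raag_eq e (word_comm (word_comm [:: (a, true)] [:: (c, true)])
                         (word_comm [:: (a, true)] [:: (c, false)])) [::].
Proof.
apply: word_act_nontrivial.
by rewrite /word_act /=; have [-> ->] := pair_act_letters true;
   have [-> ->] := pair_act_letters false.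
Qed.
End NonAdjacentPair.
End RaagWords.

(** * Matrix representations *)

Section MatrixCommutator.
Variables (F : fieldType) (n : nat).
Implicit Types P Q : 'M[F]_n.

Definition mx_comm P Q : 'M[F]_n := P *m Q *m invmx P *m invmx Q.

Lemma unitmx_comm P Q : P \in unitmx -> Q \in unitmx -> mx_comm P Q \in unitmx.
Proof. by move=> uP uQ; rewrite !unitmx_mul !unitmx_inv uP uQ. Qed.

Lemma mx_comm_eq1 P Q :
  P \in unitmx -> Q \in unitmx -> comm_mx P Q -> mx_comm P Q = 1%:M.
Proof. by move=> uP uQ PQ; rewrite /mx_comm PQ mulmxK ?mulmxV. Qed.

Lemma invmx_unique P Q : P *m Q = 1%:M -> invmx P = Q.
Proof.
move=> PQ; have [uP _] := mulmx1_unit PQ.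
by rewrite -[RHS](mulKmx uP) PQ mulmx1.
Qed.

Lemma invmx_mul P Q : P \in unitmx -> Q \in unitmx ->
  invmx (P *m Q) = invmx Q *m invmx P.
Proof.
by move=> uP uQ; apply: invmx_unique; rewrite mulmxA mulmxK ?mulmxV.
Qed.

Lemma comm_mx_scalar_add (a b : F) (A B : 'M[F]_n) :
  comm_mx (a%:M + A) (b%:M + B) <-> comm_mx A B.
Proof.
have E (c d : F) (C D : 'M[F]_n) :
    (c%:M + C) *m (d%:M + D) = (c * d)%:M + (c *: D + d *: C) + C *m D.
  by rewrite mulmxDl !mulmxDr !mul_scalar_mx mul_mx_scalar scale_scalar_mx !addrA.
by rewrite /comm_mx !E mulrC [b *: A + _]addrC; split => [/addrI | ->].
Qed.
End MatrixCommutator.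

Section MatrixEvaluation.
Variables (F : fieldType) (d : nat) (T : finType) (A : T -> 'M[F]_d).
Hypothesis A_unit : forall x, A x \in unitmx.

Lemma mx_eval_cat s t : mx_eval A (s ++ t) = mx_eval A s *m mx_eval A t.
Proof. by elim: s => [|p s IH] /=; rewrite ?mul1mx // IH mulmxA. Qed.

Lemma mx_eval_letter x b :
  mx_eval A [:: (x, b)] = if b then A x else invmx (A x).
Proof. exact: mulmx1. Qed.

Lemma mx_eval_unit w : mx_eval A w \in unitmx.
Proof.
elim: w => [|[x b] w IH]; first exact: unitmx1.
by rewrite unitmx_mul IH; case: b; rewrite ?unitmx_inv A_unit.
Qed.

Lemma mx_eval_word_inv w : mx_eval A (word_inv w) = invmx (mx_eval A w).
Proof.
elim: w => [|[x b] w IH]; first by rewrite invmx1.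
rewrite /word_inv map_cons rev_cons -cats1 mx_eval_cat -/(word_inv w) IH.
rewrite mx_eval_letter invmx_mul ?mx_eval_unit //=.
  by case: b; rewrite ?invmxK.
by case: b; rewrite ?unitmx_inv A_unit.
Qed.

Lemma mx_eval_word_comm u v :
  mx_eval A (word_comm u v) = mx_comm (mx_eval A u) (mx_eval A v).
Proof. by rewrite /word_comm !mx_eval_cat !mx_eval_word_inv !mulmxA. Qed.

End MatrixEvaluation.

Lemma raag_embeds_GL_le (T : finType) (e : rel T) (F : fieldType) d n :
  (d <= n)%N -> raag_embeds_GL e F d -> raag_embeds_GL e F n.
Proof.
move=> /subnKC <-; case=> A [A_unit A_comm A_faithful].
pose diag1 (P : 'M[F]_d) : 'M_(d + (n - d)) := block_mx P 0 0 1%:M.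
have diag1M P Q : diag1 P *m diag1 Q = diag1 (P *m Q).
  by rewrite mulmx_block !mulmx0 !mul0mx !addr0 !add0r mulmx1.
have diag1_1 : diag1 1%:M = 1%:M by rewrite /diag1 -scalar_mx_block.
have diag1_inv x : invmx (diag1 (A x)) = diag1 (invmx (A x)).
  by apply: invmx_unique; rewrite diag1M mulmxV.
have eval_diag1 w : mx_eval (diag1 \o A) w = diag1 (mx_eval A w).
  elim: w => [|[x b] w IH]; first by rewrite diag1_1.
  by rewrite /= -/(mx_eval _ w) IH; case: b; rewrite ?diag1_inv diag1M.
exists (diag1 \o A); split => [x | x y exy | w].
- by rewrite unitmxE det_ublock det1 mulr1 -unitmxE.
- by rewrite /comm_mx /= !diag1M A_comm.
- by rewrite eval_diag1 -diag1_1 => /eq_block_mx [/A_faithful].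
Qed.

(** * Linear algebra *)

Section Vectors.
Variables (F : fieldType) (n : nat).
Implicit Types (M : 'M[F]_n) (u v : 'rV[F]_n).

Definition lin_indep2 u v := forall s t : F, s *: u + t *: v = 0 -> s = 0 /\ t = 0.

Lemma scaler_eq0_nz (V : lmodType F) (s : F) (v : V) : v != 0 -> s *: v = 0 -> s = 0.
Proof. by move=> v0 /eqP; rewrite scaler_eq0 (negbTE v0) orbF => /eqP. Qed.

Lemma eigenvector_of_dep M u :
  ~ lin_indep2 u (u *m M) -> exists mu, u *m M = mu *: u.
Proof.
move=> dep; apply: NNPP => noeig; apply: dep => s t st0.
have [t0 | t_nz] := eqVneq t 0.
  move: st0; rewrite t0 scale0r addr0 => /eqP; rewrite scaler_eq0.
  case/orP=> [/eqP // | /eqP u0]; case: noeig; exists 0.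
  by rewrite u0 mul0mx scaler0.
case: noeig; exists (- (s / t)); apply: (scalerI t_nz).
rewrite scalerA mulrN mulrCA divff // mulr1 scaleNr.
by apply/eqP; rewrite -addr_eq0 addrC st0.
Qed.

Lemma common_eigenvalue M u v :
  (exists a, u *m M = a *: u) -> (exists b, v *m M = b *: v) ->
  (exists c, (u + v) *m M = c *: (u + v)) ->
  exists mu, u *m M = mu *: u /\ v *m M = mu *: v.
Proof.
move=> [a uM] [b vM] [c uvM].
have [-> | u0] := eqVneq u 0; first by exists b; rewrite mul0mx scaler0.
have [-> | v0] := eqVneq v 0; first by exists a; rewrite mul0mx scaler0.
have ac_uv : (a - c) *: u = (c - b) *: v.
  have E : a *: u + b *: v = c *: u + c *: v by rewrite -uM -vM -mulmxDl uvM scalerDr.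
  apply/rowP => i; move/rowP/(_ i): E; rewrite !mxE => E.
  by apply/eqP; rewrite -subr_eq0 -(subrr (c * u 0 i + c * v 0 i)) -{1}E; apply/eqP; ring.
have [ac | ac_nz] := eqVneq a c.
  exists a; split=> //; move: ac_uv; rewrite ac subrr scale0r => /esym.
  by move/(scaler_eq0_nz v0)/eqP; rewrite subr_eq0 => /eqP ->.
have u_v : u = ((c - b) / (a - c)) *: v.
  by rewrite mulrC -scalerA -ac_uv scalerA mulVf ?scale1r // subr_eq0.
by exists b; rewrite {1}u_v -scalemxAl vM scalerA mulrC -scalerA -u_v.
Qed.

Lemma mxrank_mul_eq0 m p (A : 'M[F]_(m, n)) (B : 'M[F]_(n, p)) :
  A *m B = 0 -> (\rank A + \rank B <= n)%N.
Proof.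
move=> AB0; have /mxrankS : (A <= kermx B)%MS by rewrite sub_kermx AB0.
by rewrite mxrank_ker; have := rank_leq_row B; lia.
Qed.

Lemma rank1_sub_rV m (A : 'M[F]_(m, n)) v :
  (\rank A <= 1)%N -> (v <= A)%MS -> v != 0 -> (A <= v)%MS.
Proof.
move=> rA vA v0; rewrite -(mxrank_leqif_sup vA) rank_rV v0.
by rewrite eqn_leq rA /= (leq_trans _ (mxrankS vA)) // rank_rV v0.
Qed.

Lemma rank1_outer m (A : 'M[F]_(m, n)) :
  (\rank A <= 1)%N -> exists (u : 'cV[F]_m) (w : 'rV[F]_n), A = u *m w.
Proof.
move=> rA; have [-> | /rowV0Pn [v vA v0]] := eqVneq A 0.
  by exists 0, 0; rewrite mul0mx.
by case/submxP: (rank1_sub_rV rA vA v0) => u ->; exists u, v.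
Qed.

Lemma mxrank_col_mx2 u v : u != 0 -> ~~ (v <= u)%MS -> \rank (col_mx u v) = 2.
Proof.
move=> u0 vu; rewrite -addsmxE.
have : (\rank u < \rank (u + v)%MS)%N.
  by rewrite rank_ltmx // ltmxE addsmxSl addsmx_sub submx_refl.
have := leq_of_leqif (mxrank_adds_leqif u v); have := rank_leq_row v.
by rewrite [\rank u]rank_rV u0; lia.
Qed.
End Vectors.

Section Krylov.
Variables (F : fieldType) (n : nat).
Implicit Types (M P Q : 'M[F]_n) (v c : 'rV[F]_n).

Definition krylov M v : 'M[F]_n := \matrix_(i < n) (v *m M ^+ i).

Lemma krylov_mul c M v : c *m krylov M v = v *m \sum_(j < n) c 0 j *: M ^+ j.
Proof.
rewrite mulmx_sum_row mulmx_sumr; apply: eq_bigr => j _.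
by rewrite rowK scalemxAr.
Qed.

Lemma krylov_unit M v :
  (forall c, v *m (\sum_(j < n) c 0 j *: M ^+ j) = 0 -> c = 0) ->
  krylov M v \in unitmx.
Proof.
move=> indep; rewrite -row_free_unit -kermx_eq0; apply/eqP/row_matrixP => i.
by rewrite row0; apply: indep; rewrite -krylov_mul -row_mul mulmx_ker row0.
Qed.

Lemma comm_mx_lincomb P M c :
  comm_mx P M -> comm_mx P (\sum_(j < n) c 0 j *: M ^+ j).
Proof.
move=> PM; apply: comm_mx_sum => j _.
by rewrite /comm_mx -scalemxAl -scalemxAr; congr (_ *: _); exact: commrX.
Qed.

(* Every matrix commuting with [M] is a polynomial in [M]. *)
Lemma krylov_centralizer_comm M v P Q : krylov M v \in unitmx ->
  comm_mx M P -> comm_mx M Q -> comm_mx P Q.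
Proof.
move=> uK MP MQ; set K := krylov M v.
pose c := v *m Q *m invmx K; pose pQ := \sum_(j < n) c 0 j *: M ^+ j.
have v_pQ : v *m pQ = v *m Q by rewrite -krylov_mul mulmxKV.
have MpQ : comm_mx M pQ by apply: comm_mx_lincomb.
have KQ : K *m Q = K *m pQ.
  apply/row_matrixP => i; rewrite !row_mul rowK -!mulmxA.
  have comm_pow N : comm_mx M N -> M ^+ i *m N = N *m M ^+ i.
    by move=> MN; apply/esym/commrX/comm_mx_sym.
  by rewrite !comm_pow // !mulmxA v_pQ.
have -> : Q = pQ by rewrite -(mulKmx uK Q) KQ mulKmx.
exact/comm_mx_lincomb/comm_mx_sym.
Qed.
End Krylov.

Section IrreducibleCharPoly.
Variables (F : fieldType) (n : nat).
Implicit Types (N : 'M[F]_n.+1) (p : {poly F}).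

Lemma horner_mx_unit N p : coprimep p (char_poly N) -> horner_mx N p \in unitmx.
Proof.
case/Bezout_eq1_coprimepP => [[u v] /= /(congr1 (horner_mx N))].
rewrite rmorphD !rmorphM /= Cayley_Hamilton mulr0 addr0 rmorph1 => uNpN.
by case/mulmx1_unit: (uNpN : horner_mx N u *m horner_mx N p = 1%:M).
Qed.

Lemma horner_mx_lincomb N (c : 'rV[F]_n.+1) :
  horner_mx N (\poly_(i < n.+1) c 0 (inord i)) = \sum_(j < n.+1) c 0 j *: N ^+ j.
Proof.
rewrite poly_def linear_sum; apply: eq_bigr => j _.
by rewrite linearZ /= rmorphXn /= horner_mx_X inord_val.
Qed.

Lemma krylov_unit_irreducible N v :
  irreducible_poly (char_poly N) -> v != 0 -> krylov N v \in unitmx.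
Proof.
move=> irrN v0; apply: krylov_unit => c vc0; apply/rowP => j; rewrite mxE.
set p := \poly_(i < n.+1) c 0 (inord i) in vc0.
suff /eqP/polyP/(_ j) : p == 0 by rewrite coef_poly ltn_ord inord_val coef0.
apply: contraNT v0 => p0.
have coprime_p : coprimep p (char_poly N).
  rewrite coprimep_sym irreducible_poly_coprime //; apply/negP.
  by move=> /(dvdp_leq p0); rewrite size_char_poly leqNgt ltnS size_poly.
move: vc0; rewrite -horner_mx_lincomb -/p.
by move/(canRL (mulmxK (horner_mx_unit coprime_p))); rewrite mul0mx => ->.
Qed.
End IrreducibleCharPoly.

Section RankOne.
Variables (F : fieldType) (n : nat).
Local Notation cV := 'cV[F]_n.
Local Notation rV := 'rV[F]_n.
Implicit Types (u x : cV) (w y : rV).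

Lemma mulmx_outerr y x w : y *m (x *m w) = (y *m x) 0 0 *: w.
Proof. by rewrite mulmxA {1}[y *m x]mx11_scalar mul_scalar_mx. Qed.

Lemma mulmx_outerl u y x : (u *m y) *m x = (y *m x) 0 0 *: u.
Proof. by rewrite -mulmxA {1}[y *m x]mx11_scalar mul_mx_scalar. Qed.

Lemma mulmx_outer u w x y : (u *m w) *m (x *m y) = (w *m x) 0 0 *: (u *m y).
Proof. by rewrite mulmxA mulmx_outerl scalemxAl. Qed.

Lemma outer_eq0 u w : (u *m w == 0) = (u == 0) || (w == 0).
Proof.
have [-> | u0] := eqVneq u 0; first by rewrite mul0mx eqxx.
have [-> | w0] := eqVneq w 0; first by rewrite mulmx0 eqxx.
rewrite -mxrank_eq0 mxrankMfree ?mxrank_eq0 ?(negbTE u0) //.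
by rewrite /row_free rank_rV w0.
Qed.

Lemma rank1_comm x y u w :
  x *m y != 0 -> u *m w != 0 -> comm_mx (x *m y) (u *m w) ->
  (y *m u = 0 /\ w *m x = 0) \/ exists k, x *m y = k *: (u *m w).
Proof.
rewrite !outer_eq0 !negb_or => /andP [x0 y0] /andP [u0 w0].
rewrite /comm_mx !mulmx_outer.
set al := (y *m u) 0 0; set be := (w *m x) 0 0; set ga := (y *m x) 0 0 => E.
have xw0 : x *m w != 0 by rewrite outer_eq0 negb_or x0.
have uy0 : u *m y != 0 by rewrite outer_eq0 negb_or u0.
have [al0 | al_nz] := eqVneq al 0.
  have be0 : be = 0 by apply: (scaler_eq0_nz uy0); rewrite -E al0 scale0r.
  by left; rewrite [y *m u]mx11_scalar [w *m x]mx11_scalar -/al -/be al0 be0 raddf0.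
have [be0 | be_nz] := eqVneq be 0.
  by move: E; rewrite be0 scale0r => /(scaler_eq0_nz xw0) /eqP; rewrite (negbTE al_nz).
right; have /(congr1 (mulmx y)) := E; have /(congr1 (mulmx^~ x)) := E.
rewrite -!scalemxAr -!scalemxAl !mulmx_outerr !mulmx_outerl -/al -/be -/ga !scalerA.
move=> /(congr1 ( *:%R (al * be)^-1)); rewrite !scalerA => x_u.
move=> /(congr1 ( *:%R (be * al)^-1)); rewrite !scalerA => y_w.
rewrite mulVf ?mulf_neq0 // scale1r in x_u; rewrite mulVf ?mulf_neq0 // scale1r in y_w.
exists (((al * be)^-1 * (be * ga)) * ((be * al)^-1 * (al * ga))).
by rewrite x_u -y_w -scalemxAl -scalemxAr scalerA.
Qed.
End RankOne.

Section Flag.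
Variables (F : fieldType) (m n : nat) (W : 'M[F]_(m, n)).
Implicit Types Y Z C D : 'M[F]_n.

(* [Y] preserves the row space of [W], acting on it as the scalar [b] and on
   the quotient as the scalar [a]. *)
Definition flag_scalar Y :=
  exists a b : F, (Y - a%:M <= W)%MS /\ W *m Y = b *: W.

Definition flag_unipotent C := (C - 1%:M <= W)%MS /\ W *m C = W.

Lemma flag_scalar_stable Y : flag_scalar Y -> stablemx W Y.
Proof. by move=> [_ [b [_ ->]]]; exact: scalemx_sub. Qed.

Lemma flag_scalar_invmx Y : Y \in unitmx -> flag_scalar Y -> flag_scalar (invmx Y).
Proof.
move=> uY [a [b [YaW WY]]]; exists a^-1, b^-1; split.
  have [a0 | a_nz] := eqVneq a 0.
    move: YaW; rewrite a0 invr0 raddf0 !subr0 => YW.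
    have -> : invmx Y = (invmx Y *m invmx Y) *m Y by rewrite mulmxKV.
    exact: submx_trans (submxMl _ _) YW.
  have -> : invmx Y - a^-1%:M = - a^-1 *: (invmx Y *m (Y - a%:M)).
    rewrite mulmxBr mulVmx // mul_mx_scalar scalerBr scalerA mulNr mulVf //.
    by rewrite scaleN1r opprK scaleNr scalemx1 addrC.
  by rewrite scalemx_sub // (submx_trans (submxMl _ _) YaW).
have [b0 | b_nz] := eqVneq b 0.
  have W0 : W = 0 by rewrite -(mulmxK uY W) WY b0 scale0r mul0mx.
  by rewrite W0 mul0mx scaler0.
by rewrite -[in RHS](mulmxK uY W) WY -scalemxAl scalerA mulVf ?scale1r.
Qed.

Lemma flag_unipotent_mx_comm Y Z : Y \in unitmx -> Z \in unitmx ->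
  flag_scalar Y -> flag_scalar Z -> flag_unipotent (mx_comm Y Z).
Proof.
move=> uY uZ fY fZ; split.
  have -> : mx_comm Y Z - 1%:M = (Y *m Z - Z *m Y) *m (invmx Y *m invmx Z).
    by rewrite mulmxBl !mulmxA mulmxK // mulmxV.
  have [a' [_ [ZaW _]]] := fZ.
  have -> : Y *m Z - Z *m Y = Y *m (Z - a'%:M) - (Z - a'%:M) *m Y.
    by rewrite mulmxBr mulmxBl mul_mx_scalar mul_scalar_mx opprB addrA subrK.
  apply: submx_trans (submxMr _ _) (stablemxM _ _).
  - rewrite addmx_sub ?eqmx_opp ?(submx_trans (submxMl _ _) ZaW) //.
    exact: submx_trans (submxMr _ ZaW) (flag_scalar_stable fY).
  - exact/flag_scalar_stable/flag_scalar_invmx.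
  - exact/flag_scalar_stable/flag_scalar_invmx.
have [_ [b [_ WY]]] := fY; have [_ [b' [_ WZ]]] := fZ.
have WYZ : W *m (Y *m Z) = W *m (Z *m Y).
  by rewrite !mulmxA WY WZ -!scalemxAl WY WZ !scalerA mulrC.
by rewrite /mx_comm !mulmxA -(mulmxA W Y Z) WYZ !mulmxA mulmxK // mulmxK.
Qed.

Lemma flag_unipotent_comm C D : flag_unipotent C -> flag_unipotent D -> comm_mx C D.
Proof.
have nil X X' : flag_unipotent X -> flag_unipotent X' ->
    (X - 1%:M) *m (X' - 1%:M) = 0.
  move=> [/submxP [E ->] _] [_ WX']; rewrite -mulmxA.
  by rewrite mulmxBr WX' mulmx1 subrr mulmx0.
move=> uC uD.
have CD : comm_mx (C - 1%:M) (D - 1%:M) by rewrite /comm_mx !nil.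
rewrite -[C](subrK 1%:M) -[D](subrK 1%:M).
apply: comm_mx_sym; apply: comm_mxD (comm_mx1 _).
by apply: comm_mx_sym; apply: comm_mxD CD (comm_mx1 _).
Qed.

Lemma flag_scalar_metabelian Y Z : Y \in unitmx -> Z \in unitmx ->
  flag_scalar Y -> flag_scalar Z -> comm_mx (mx_comm Y Z) (mx_comm Y (invmx Z)).
Proof.
move=> uY uZ fY fZ; apply: flag_unipotent_comm; apply: flag_unipotent_mx_comm => //.
  by rewrite unitmx_inv.
exact: flag_scalar_invmx.
Qed.
End Flag.

Section FlagRankOne.
Variables (F : fieldType) (n : nat).
Implicit Types (u : 'cV[F]_n) (w : 'rV[F]_n).

Lemma flag_scalar_row u w w1 b : (w <= w1)%MS -> flag_scalar w1 (b%:M + u *m w).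
Proof.
case/sub_rVP => s ->; exists b, (b + s * (w1 *m u) 0 0); split.
  by rewrite addrC addKr (submx_trans (submxMl _ _)) ?scalemx_sub.
by rewrite mulmxDr mul_mx_scalar -!scalemxAr mulmx_outerr scalerA scalerDl mulrC.
Qed.

Lemma flag_scalar_col u u1 w b :
  (u^T <= u1^T)%MS -> flag_scalar (kermx u1) (b%:M + u *m w).
Proof.
case/sub_rVP => s us; have -> : u = s *: u1 by apply: trmx_inj; rewrite us linearZ.
exists (b + s * (w *m u1) 0 0), b; split.
  rewrite sub_kermx mulmxBl mulmxDl mul_scalar_mx -!scalemxAl mulmx_outerl.
  by rewrite mul_scalar_mx scalerA scalerDl subrr.
by rewrite mulmxDr mul_mx_scalar -scalemxAl -scalemxAr mulmxA mulmx_ker mul0mx scaler0 addr0.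
Qed.

End FlagRankOne.

(** * 3x3 matrices *)

Section ThreeByThree.
Variable F : fieldType.
Local Notation M3 := 'M[F]_3.
Local Notation rV := 'rV[F]_3.
Local Notation cV := 'cV[F]_3.
Implicit Types (M N : M3) (k v x y z : rV).

Lemma krylov3_unit M v :
  (forall a b c : F, a *: v + b *: (v *m M) + c *: (v *m M *m M) = 0 ->
     [/\ a = 0, b = 0 & c = 0]) ->
  krylov M v \in unitmx.
Proof.
move=> indep; apply: krylov_unit => c.
rewrite !big_ord_recl big_ord0 addr0 !mulmxDr -!scalemxAr /= expr0 expr1 expr2.
rewrite mulmx1 -mulmxE mulmxA addrA => /indep [c0 c1 c2].
apply/rowP => -[[|[|[|//]]] j3]; rewrite mxE;
  [rewrite -c0 | rewrite -c1 | rewrite -c2]; congr (c 0 _); exact: val_inj.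
Qed.

Lemma mulmx_sqr_scale M :
  (forall x, exists mu, x *m M *m M = mu *: (x *m M)) -> exists mu, M *m M = mu *: M.
Proof.
move=> eig; have [-> | /rowV0Pn [_ /submxP [x0 ->] x0M0]] := eqVneq M 0.
  by exists 0; rewrite mul0mx scaler0.
have [mu x0M] := eig x0; exists mu; apply/row_matrixP => i.
rewrite row_mul !rowE -scalemxAr; set x := delta_mx 0 i.
have [nu [x0M' xM]] : exists nu, x0 *m M *m M = nu *: (x0 *m M) /\ x *m M *m M = nu *: (x *m M).
  by apply: common_eigenvalue; rewrite -?mulmxDl; apply: eig.
suff -> : mu = nu by [].
by apply/eqP; rewrite -subr_eq0; apply/eqP/(scaler_eq0_nz x0M0); rewrite scalerBl -x0M -x0M' subrr.
Qed.

Lemma krylov_unit_kernel_image M k x :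
  k != 0 -> k *m M = 0 -> (forall y, y *m M *m M = 0 -> y *m M = 0) ->
  lin_indep2 (x *m M) (x *m M *m M) -> krylov M (k + x *m M) \in unitmx.
Proof.
move=> k0 kM kerM2 indep; apply: krylov3_unit => a b c.
set u := x *m M; set w := a *: x + b *: u + c *: (u *m M).
have -> : a *: (k + u) + b *: ((k + u) *m M) + c *: ((k + u) *m M *m M) =
    a *: k + w *m M.
  by rewrite /w !mulmxDl kM mul0mx !add0r -!scalemxAl scalerDr !addrA.
move=> E; have a0 : a = 0.
  apply/eqP; apply: contraTT k0 => a_nz; rewrite negbK; apply/eqP.
  have k_im : k = (- a^-1 *: w) *m M.
    have /(congr1 ( *:%R a^-1)) : a *: k = - (w *m M) by apply/eqP; rewrite -addr_eq0 E.
    by rewrite scalerA mulVf // scale1r => ->; rewrite -scalemxAl scaleNr scalerN.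
  by rewrite k_im kerM2 // -k_im.
move: E; rewrite /w /u a0 !scale0r !add0r.
have -> : b *: (x *m M) + c *: (x *m M *m M) = (b *: x + c *: (x *m M)) *m M.
  by rewrite mulmxDl -!scalemxAl.
by move/kerM2; rewrite mulmxDl -!scalemxAl => /indep [-> ->].
Qed.

Lemma krylov_unit_nilpotent M v :
  v *m M *m M != 0 -> v *m M *m M *m M = 0 -> krylov M v \in unitmx.
Proof.
move=> vM2 vM3; apply: krylov3_unit => a b c E.
have /(congr1 (mulmx^~ (M *m M))) := E.
rewrite !mulmxA mul0mx !mulmxDl -!scalemxAl vM3 !mul0mx !scaler0 !addr0.
move/(scaler_eq0_nz vM2) => a0; move: E; rewrite a0 scale0r add0r => E.
have /(congr1 (mulmx^~ M)) := E.
rewrite mul0mx !mulmxDl -!scalemxAl vM3 scaler0 addr0 => /(scaler_eq0_nz vM2) b0.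
by move: E; rewrite b0 scale0r add0r => /(scaler_eq0_nz vM2) c0.
Qed.

Lemma krylov_unit_jordan_eigen M y z mu :
  y *m M *m M = 0 -> y *m M != 0 -> z != 0 -> z *m M = mu *: z -> mu != 0 ->
  krylov M (y + z) \in unitmx.
Proof.
move=> yM2 k0 z0 zM mu0; set k := y *m M in yM2 k0 *.
apply: krylov3_unit => a b c.
set phi := a + b * mu + c * mu ^+ 2.
have -> : a *: (y + z) + b *: ((y + z) *m M) + c *: ((y + z) *m M *m M) =
    a *: y + b *: k + phi *: z.
  rewrite !mulmxDl -/k yM2 zM add0r -scalemxAl zM scalerA.
  by apply/rowP => i; rewrite !mxE /phi; ring.
move=> E; have E1 : a *: k + (phi * mu) *: z = 0.
  by rewrite -[RHS](mul0mx _ M) -E !mulmxDl -!scalemxAl yM2 scaler0 addr0 zM scalerA.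
have phi0 : phi = 0.
  have /(congr1 (mulmx^~ M)) := E1.
  rewrite mul0mx mulmxDl -!scalemxAl yM2 scaler0 add0r zM scalerA.
  by move/(scaler_eq0_nz z0)/eqP; rewrite !mulf_eq0 (negbTE mu0) !orbF => /eqP.
have a0 : a = 0 by apply: (scaler_eq0_nz k0); rewrite -E1 phi0 mul0r scale0r addr0.
have b0 : b = 0.
  by apply: (scaler_eq0_nz k0); rewrite -E a0 phi0 !scale0r add0r addr0.
split=> //; move: phi0; rewrite /phi a0 b0 mul0r !add0r => /eqP.
by rewrite mulf_eq0 expf_eq0 (negbTE mu0) andbF orbF => /eqP.
Qed.

Lemma rank1_or_krylov_of_nilpotent_vector M y :
  y *m M *m M = 0 -> y *m M != 0 ->
  (\rank M <= 1)%N \/ exists v, krylov M v \in unitmx.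
Proof.
move=> yM2 k0.
have [M2_0 | /rowV0Pn [_ /submxP [p ->] z0]] := eqVneq (M *m M) 0.
  by left; have := mxrank_mul_eq0 M2_0; lia.
right; set z := p *m (M *m M) in z0 *.
have rM2 : (\rank (M *m M) <= 1)%N.
  have : col_mx (y *m M) y *m (M *m M) = 0.
    by rewrite mul_col_mx !mulmxA yM2 mul0mx col_mx0.
  move/mxrank_mul_eq0; rewrite mxrank_col_mx2 //.
  by apply: contra k0 => /sub_rVP [s ->]; rewrite -scalemxAl yM2 scaler0.
have [mu zM] : exists mu, z *m M = mu *: z.
  have zM_sub : (z *m M <= M *m M)%MS by rewrite /z -!mulmxA mulmxA submxMl.
  by case/sub_rVP: (submx_trans zM_sub (rank1_sub_rV rM2 (submxMl p _) z0)) => mu; exists mu.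
have [mu0 | mu_nz] := eqVneq mu 0.
  exists p; apply: krylov_unit_nilpotent; first by rewrite -mulmxA.
  by rewrite -(mulmxA p) zM mu0 scale0r.
by exists (y + z); apply: (krylov_unit_jordan_eigen yM2 k0 z0 zM mu_nz).
Qed.

(* Three cases: the kernel of [M] meets its image; or [M] restricted to its
   image has a cyclic vector [x *m M], and then [k + x *m M] is cyclic for
   [M]; or [M] acts on its image as a scalar [mu], so [M *m (M - mu)] = 0. *)
Lemma singular_rank1_or_krylov M k : k != 0 -> k *m M = 0 ->
  (exists mu, \rank (M - mu%:M)%R <= 1)%N \/ exists v, krylov M v \in unitmx.
Proof.
move=> k0 kM.
have [[y [yM2 yM]] | noJ] := classic (exists y, y *m M *m M = 0 /\ y *m M != 0).
  case: (rank1_or_krylov_of_nilpotent_vector yM2 yM) => [rM | ]; last by right.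
  by left; exists 0; rewrite raddf0 subr0.
have kerM2 y : y *m M *m M = 0 -> y *m M = 0.
  by move=> yM2; apply/eqP; apply: contraT => yM; case: noJ; exists y.
have [[x indep] | dep] := classic (exists x, lin_indep2 (x *m M) (x *m M *m M)).
  by right; exists (k + x *m M); apply: krylov_unit_kernel_image.
have [mu MM] : exists mu, M *m M = mu *: M.
  apply: mulmx_sqr_scale => x; apply: eigenvector_of_dep => indep.
  by case: dep; exists x.
have /mxrank_mul_eq0 rk : M *m (M - mu%:M) = 0 by rewrite mulmxBr MM mul_mx_scalar subrr.
case: (leqP (\rank M) 1) => rM; left; first by exists 0; rewrite raddf0 subr0.
by exists mu; rewrite -(leq_add2l (\rank M)) (leq_trans rk) // addn1.
Qed.

Lemma scalar_rank1_or_krylov N :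
  (exists l (u : 'cV[F]_3) w, N = l%:M + u *m w) \/
  (exists l v, krylov (N - l%:M) v \in unitmx).
Proof.
have [[l] | noroot] := classic (exists l, root (char_poly N) l).
  rewrite -eigenvalue_root_char => /eigenvalueP [k kN k0].
  have kM : k *m (N - l%:M) = 0 by rewrite mulmxBr kN mul_mx_scalar subrr.
  case: (singular_rank1_or_krylov k0 kM) => [[mu] | ]; last by right; exists l.
  case/rank1_outer => u [w uw]; left; exists (l + mu), u, w.
  by rewrite -uw raddfD /= [RHS]addrC [l%:M + _]addrC subrKA subrK.
right; exists 0, (delta_mx 0 0); rewrite raddf0 subr0.
apply: krylov_unit_irreducible.
  apply: cubic_irreducible; first by rewrite size_char_poly.
  by move=> x; apply/negP => rx; case: noroot; exists x.
by apply/eqP => /matrixP /(_ 0 0); rewrite !mxE eqxx /= => /eqP; rewrite oner_eq0.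
Qed.

Lemma noncomm_centralizer_rank1 N P Q :
  comm_mx N P -> comm_mx N Q -> ~ comm_mx P Q ->
  exists l (u : 'cV[F]_3) w, N = l%:M + u *m w.
Proof.
move=> NP NQ nPQ; case: (scalar_rank1_or_krylov N) => // [[l [v Kv]]].
have shift X : comm_mx N X -> comm_mx (N - l%:M) X.
  by move=> NX; rewrite /comm_mx mulmxBl mulmxBr NX scalar_mxC.
by case: nPQ; apply: (krylov_centralizer_comm Kv); apply: shift.
Qed.
End ThreeByThree.

Section CommutingPairs.
Variable F : fieldType.
Local Notation M3 := 'M[F]_3.
Local Notation rV := 'rV[F]_3.
Local Notation cV := 'cV[F]_3.

Lemma orthogonal_sub (p1 p2 : cV) (z1 z2 : rV) :
  p1 != 0 -> ~~ (p2^T <= p1^T)%MS -> z1 != 0 ->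
  z1 *m p1 = 0 -> z1 *m p2 = 0 -> z2 *m p1 = 0 -> z2 *m p2 = 0 -> (z2 <= z1)%MS.
Proof.
move=> p1_0 p21 z1_0 z1p1 z1p2 z2p1 z2p2.
have zK (z : rV) : z *m p1 = 0 -> z *m p2 = 0 -> (z <= kermx (row_mx p1 p2))%MS.
  by move=> zp1 zp2; rewrite sub_kermx mul_mx_row zp1 zp2 row_mx0.
have rK : (\rank (kermx (row_mx p1 p2)) <= 1)%N.
  by rewrite mxrank_ker -mxrank_tr tr_row_mx mxrank_col_mx2 ?trmx_eq0.
exact: submx_trans (zK _ z2p1 z2p2) (rank1_sub_rV rK (zK _ z1p1 z1p2) z1_0).
Qed.

Lemma commuting_rank1_parallel (x1 x2 u1 u2 : cV) (y1 y2 w1 w2 : rV) :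
  comm_mx (x1 *m y1) (u1 *m w1) -> comm_mx (x1 *m y1) (u2 *m w2) ->
  comm_mx (x2 *m y2) (u1 *m w1) -> comm_mx (x2 *m y2) (u2 *m w2) ->
  ~ comm_mx (u1 *m w1) (u2 *m w2) -> ~ comm_mx (x1 *m y1) (x2 *m y2) ->
  (u2^T <= u1^T)%MS \/ (w2 <= w1)%MS.
Proof.
move=> c11 c12 c21 c22 nR nS.
have nz (A B : 'M[F]_3) : ~ comm_mx A B -> A != 0 /\ B != 0.
  by move=> nAB; split; apply: contra_not_neq nAB => ->; [exact: comm0mx | exact: comm_mx0].
have [R1_0 R2_0] := nz _ _ nR; have [S1_0 S2_0] := nz _ _ nS.
have orth (x : cV) (y : rV) : x *m y != 0 ->
    comm_mx (x *m y) (u1 *m w1) -> comm_mx (x *m y) (u2 *m w2) ->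
    [/\ y *m u1 = 0, w1 *m x = 0, y *m u2 = 0 & w2 *m x = 0].
  move=> S0 c1 c2.
  have par (R R' : M3) : (exists k : F, x *m y = k *: R) -> comm_mx (x *m y) R' -> comm_mx R R'.
    move=> [k SkR]; have k0 : k != 0 by apply: contraNneq S0 => k0; rewrite SkR k0 scale0r.
    by rewrite /comm_mx SkR -scalemxAl -scalemxAr => /(scalerI k0).
  case: (rank1_comm S0 R1_0 c1) => [[o1 o2] | /par /(_ c2) /nR //].
  case: (rank1_comm S0 R2_0 c2) => [[o3 o4] | /par /(_ c1) /comm_mx_sym /nR //].
  by [].
have [o11 o12 o13 o14] := orth _ _ S1_0 c11 c12.
have [o21 o22 o23 o24] := orth _ _ S2_0 c21 c22.
apply: NNPP => /not_or_and [/negP nu /negP nw]; apply: nS.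
move: R1_0 S1_0; rewrite !outer_eq0 !negb_or => /andP [u1_0 w1_0] /andP [x1_0 y1_0].
have /sub_rVP [s ->] := orthogonal_sub u1_0 nu y1_0 o11 o13 o21 o23.
have /sub_rVP [t x2t] : (x2^T <= x1^T)%MS.
  by apply: (orthogonal_sub (p1 := w1^T) (p2 := w2^T));
    rewrite ?trmxK ?trmx_eq0 // -trmx_mul ?o12 ?o14 ?o22 ?o24 trmx0.
have -> : x2 = t *: x1 by apply: trmx_inj; rewrite x2t linearZ.
by rewrite -scalemxAl -scalemxAr scalerA /comm_mx -scalemxAr -scalemxAl.
Qed.

Lemma GL3_commuting_square (X1 X2 Y1 Y2 : M3) :
  Y1 \in unitmx -> Y2 \in unitmx ->
  comm_mx X1 Y1 -> comm_mx X1 Y2 -> comm_mx X2 Y1 -> comm_mx X2 Y2 ->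
  [\/ comm_mx X1 X2, comm_mx Y1 Y2 | comm_mx (mx_comm Y1 Y2) (mx_comm Y1 (invmx Y2))].
Proof.
move=> uY1 uY2 c11 c12 c21 c22.
have [? | nX] := classic (comm_mx X1 X2); first by constructor 1.
have [? | nY] := classic (comm_mx Y1 Y2); first by constructor 2.
constructor 3.
have [b1 [u1 [w1 eY1]]] := noncomm_centralizer_rank1 (comm_mx_sym c11) (comm_mx_sym c21) nX.
have [b2 [u2 [w2 eY2]]] := noncomm_centralizer_rank1 (comm_mx_sym c12) (comm_mx_sym c22) nX.
have [g1 [x1 [y1 eX1]]] := noncomm_centralizer_rank1 c11 c12 nY.
have [g2 [x2 [y2 eX2]]] := noncomm_centralizer_rank1 c21 c22 nY.
rewrite eX1 eX2 eY1 eY2 !comm_mx_scalar_add in c11 c12 c21 c22 nX nY.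
case: (commuting_rank1_parallel c11 c12 c21 c22 nY nX) => [u21 | w21].
- apply: (flag_scalar_metabelian (W := kermx u1)) => //;
    by rewrite ?eY1 ?eY2; apply: flag_scalar_col.
- apply: (flag_scalar_metabelian (W := w1)) => //;
    by rewrite ?eY1 ?eY2; apply: flag_scalar_row.
Qed.
End CommutingPairs.

Local Close Scope ring_scope.

Theorem theorem3p2 (T : finType) (e : rel T) :
  simple_graph e -> raag_m_le e 3 -> ~ has_induced_square e.
Proof.
move=> [e_sym _] [n [F [n_le3 /(raag_embeds_GL_le n_le3) [A [A_unit A_comm A_faithful]]]]].
move=> [a [b [c [d [abcd /and4P [eab ebc ecd eda] /andP [nac nbd]]]]]].
have [ac bd] : a != c /\ b != d.
  by move: abcd; rewrite /= !inE !negb_or => /and4P [/and3P [_ ? _] /andP [_ ?] _ _].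
have nca : ~~ e c a by rewrite e_sym.
have ndb : ~~ e d b by rewrite e_sym.
have ead : e a d by rewrite e_sym.
have ecb : e c b by rewrite e_sym.
have [] := GL3_commuting_square (A_unit b) (A_unit d)
  (A_comm _ _ eab) (A_comm _ _ ead) (A_comm _ _ ecb) (A_comm _ _ ecd).
- move=> AaAc; apply: (raag_comm_nontrivial nac nca ac); apply: A_faithful.
  by rewrite (mx_eval_word_comm A_unit) !mx_eval_letter mx_comm_eq1.
- move=> AbAd; apply: (raag_comm_nontrivial nbd ndb bd); apply: A_faithful.
  by rewrite (mx_eval_word_comm A_unit) !mx_eval_letter mx_comm_eq1.
- move=> AbAd; apply: (raag_comm2_nontrivial nbd ndb bd); apply: A_faithful.
  by rewrite !(mx_eval_word_comm A_unit) !mx_eval_letter mx_comm_eq1 ?unitmx_comm ?unitmx_inv.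
Qed.
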